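(* For every $n\ge1$, $\alpha_{\mathrm{od}}(P_n)=\lceil n/3\rceil$, and for every $n\ge3$, $\alpha_{\mathrm{od}}(C_n)=\lceil(n-2)/3\rceil$.
   Context: $P_n$ is the path on $n$ vertices and $C_n$ the cycle on $n$ vertices. An odd independent set in $G=(V,E)$ is an independent set $S$ such that every $v\in V\setminus S$ has either no neighbor or an odd number of neighbors in $S$; $\alpha_{\mathrm{od}}(G)$ is its maximum size. *)

From mathcomp Require Import all_boot.
Set Implicit Arguments. Unset Strict Implicit. Unset Printing Implicit Defensive.

(* A simple graph on a finite vertex type T is given by a symmetric,
   irreflexive adjacency relation e : rel T. *)

Definition nbrs_in (T : finType) (e : rel T) (S : {set T}) (v : T) : {set T} :=
  [set u in S | e v u].

Definition independent (T : finType) (e : rel T) (S : {set T}) : bool :=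
  [forall u in S, forall v in S, ~~ e u v].

Definition odd_independent (T : finType) (e : rel T) (S : {set T}) : bool :=
  independent e S &&
  [forall v in ~: S, (#|nbrs_in e S v| == 0) || odd #|nbrs_in e S v|].

(* odd independence number: maximum size of an odd independent set
   (the empty set is always odd independent, so this is well defined) *)
Definition alpha_od (T : finType) (e : rel T) : nat :=
  \max_(S : {set T} | odd_independent e S) #|S|.

Definition path_rel (n : nat) : rel 'I_n :=
  fun i j => (i.+1 == j :> nat) || (j.+1 == i :> nat).

Definition cycle_rel (n : nat) : rel 'I_n :=
  fun i j => (i.+1 %% n == j :> nat) || (j.+1 %% n == i :> nat).
Arguments path_rel n : clear implicits.
Arguments cycle_rel n : clear implicits.

(* For the graph [x -- f x] of an injective map f without points of period
   at most 2, a set S is odd independent iff S, f(S) and f(f(S)) are pairwise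
   disjoint: if a and f (f a) both lie in S, the vertex f a has exactly two
   neighbours in S.  Hence 3 |S| <= |V|.  The cycle C_n is such a graph for the
   successor map of Z/nZ, and P_n is the subgraph of C_(n+2) induced on its
   first n vertices, which gives 3 |S| <= n and 3 |S| <= n + 2.  The multiples
   of 3 attain both bounds. *)

From mathcomp Require Import all_boot zify.

Set Implicit Arguments.
Unset Strict Implicit.
Unset Printing Implicit Defensive.

Section OddIndependent.
Variables (T : finType) (e : rel T) (S : {set T}).

Lemma odd_independent_indep :
  odd_independent e S -> {in S &, forall u v, ~~ e u v}.
Proof.
by case/andP=> /forall_inP indS _ u v uS vS; exact: (forall_inP (indS u uS) v vS).
Qed.

Lemma odd_independent_two_nbrs v a b :
  odd_independent e S -> a \in S -> b \in S ->
  (forall u, e v u = (u == a) || (u == b)) -> a = b.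
Proof.
move=> oiS aS bS nbrs_v.
have vNS : v \notin S.
  by apply/negP=> vS; have := odd_independent_indep oiS vS aS; rewrite nbrs_v eqxx.
have nbrs_vS : nbrs_in e S v = [set a; b].
  by apply/setP=> u; rewrite !inE nbrs_v; apply/andb_idl => /orP[] /eqP->.
case/andP: oiS => _ /forall_inP/(_ v); rewrite in_setC vNS nbrs_vS cards2 /= oddb negbK.
by move=> /(_ isT) /eqP.
Qed.

Lemma odd_independent_nbrs_le1 :
  independent e S -> (forall v, #|nbrs_in e S v| <= 1) -> odd_independent e S.
Proof.
move=> indS nbrs_le1; rewrite /odd_independent indS.
by apply/forall_inP => v _; case: #|_| (nbrs_le1 v) => [|[]].
Qed.

End OddIndependent.

Lemma alpha_od_eq (T : finType) (e : rel T) (S0 : {set T}) c :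
  odd_independent e S0 -> #|S0| = c ->
  (forall S, odd_independent e S -> #|S| <= c) -> alpha_od e = c.
Proof.
move=> oiS0 <- ub; apply/eqP; rewrite eqn_leq (leq_bigmax_cond _ oiS0) andbT.
exact/bigmax_leqP.
Qed.

Definition succ_rel (T : finType) (f : T -> T) : rel T :=
  fun x y => (f x == y) || (f y == x).

Definition separated (T : finType) (f : T -> T) (S : {set T}) : bool :=
  [forall a in S, (f a \notin S) && (f (f a) \notin S)].

Section SuccessorGraph.
Variables (T : finType) (f : T -> T).
Hypothesis f_inj : injective f.

Lemma odd_independent_succE (S : {set T}) :
  (forall x, f (f x) != x) -> odd_independent (succ_rel f) S = separated f S.
Proof.
move=> f2_neq; apply/idP/forall_inP => [oiS a aS | sepS].
  apply/andP; split; apply/negP => fS.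
    by have := odd_independent_indep oiS aS fS; rewrite /succ_rel eqxx.
  have nbrs_fa u : succ_rel f (f a) u = (u == a) || (u == f (f a)).
    by rewrite /succ_rel (inj_eq f_inj) orbC [f (f a) == u]eq_sym.
  by have /eqP[] := f2_neq a; rewrite -(odd_independent_two_nbrs oiS aS fS nbrs_fa).
apply: odd_independent_nbrs_le1.
  apply/forall_inP => a aS; apply/forall_inP => b bS.
  by rewrite negb_or; apply/andP; split; apply/eqP => fE;
    [case/andP: (sepS a aS) | case/andP: (sepS b bS)]; rewrite fE ?aS ?bS.
move=> v; apply/card_le1_eqP => a b; rewrite !inE /succ_rel.
case/andP=> aS /orP[] /eqP fa; case/andP=> bS /orP[] /eqP fb.
- by rewrite -fa -fb.
- by case/andP: (sepS b bS); rewrite fb fa aS.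
- by case/andP: (sepS a aS); rewrite fa fb bS.
- by apply: f_inj; rewrite fa fb.
Qed.

Lemma card_separated (S : {set T}) : separated f S -> 3 * #|S| <= #|T|.
Proof.
move=> /forall_inP sepS.
have cardU (A B : {set T}) : [disjoint A & B] -> #|A :|: B| = #|A| + #|B|.
  by move=> AB; apply/eqP; rewrite (leq_card_setU A B).
have disj_f : [disjoint S & f @: S].
  rewrite disjoints_subset; apply/subsetP => x xS; rewrite inE.
  by apply/imsetP => -[a aS xE]; case/andP: (sepS a aS); rewrite -xE xS.
have disj_ff : [disjoint S & f @: (S :|: f @: S)].
  rewrite disjoints_subset; apply/subsetP => x xS; rewrite inE.
  apply/imsetP => -[b /setUP[bS | /imsetP[a aS ->]] xE].
    by case/andP: (sepS b bS); rewrite -xE xS.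
  by case/andP: (sepS a aS) => _; rewrite -xE xS.
apply: leq_trans _ (max_card (S :|: f @: (S :|: f @: S))).
rewrite !(cardU, card_imset) //; lia.
Qed.

End SuccessorGraph.

Lemma val_ordS n (i : 'I_n) : i.+1 < n -> ordS i = i.+1 :> nat.
Proof. exact: modn_small. Qed.

Lemma ordS2_neq n (i : 'I_n) : 2 < n -> ordS (ordS i) != i.
Proof.
move=> n_gt2; rewrite -val_eqE /= -[(_ %% n).+1]addn1 modnDml addn1.
apply/eqP => mod_i; have := divn_eq i.+2 n; rewrite mod_i.
by case: (i.+2 %/ n) => [|q]; nia.
Qed.

Lemma cycle_relE n : cycle_rel n = succ_rel (@ordS n).
Proof. by []. Qed.

Lemma cycle_odd_independentE n (S : {set 'I_n}) :
  2 < n -> odd_independent (cycle_rel n) S = separated (@ordS n) S.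
Proof.
move=> n_gt2; rewrite cycle_relE (odd_independent_succE (@ordS_inj n)) // => i.
exact: ordS2_neq.
Qed.

Lemma card_multiples3 N m :
  m <= N.+1 -> #|[set i : 'I_N.+1 | 3 %| i & i < m]| = (m + 2) %/ 3.
Proof.
move=> le_mN.
have lt_mul3 (k : 'I_((m + 2) %/ 3)) : 3 * k < N.+1 by have := ltn_ord k; lia.
have mul3_inj : injective (fun k : 'I_((m + 2) %/ 3) => inord (3 * k) : 'I_N.+1).
  by move=> k l /(congr1 (@nat_of_ord _)); rewrite !inordK // => eq3k; apply: ord_inj; lia.
rewrite -[RHS]card_ord -(card_imset _ mul3_inj); apply: eq_card => i; rewrite inE.
apply/andP/imsetP => [[/dvdnP[k def_i] lt_im] | [k _ ->]].
  have lt_k : k < (m + 2) %/ 3 by lia.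
  by exists (Ordinal lt_k); last by apply: ord_inj; rewrite /= inordK //; lia.
by rewrite inordK // dvdn_mulr //; have := ltn_ord k; lia.
Qed.

Lemma path_multiples3_odd_independent n m :
  odd_independent (path_rel n) [set i : 'I_n | 3 %| i & i < m].
Proof.
apply: odd_independent_nbrs_le1 => [|v].
  apply/forall_inP => u; rewrite inE => /andP[u3 _].
  by apply/forall_inP => w; rewrite inE /path_rel => /andP[w3 _]; lia.
apply/card_le1_eqP => u w; rewrite !inE /path_rel => /andP[/andP[u3 _] vu].
by case/andP=> /andP[w3 _] vw; apply: ord_inj; lia.
Qed.

Lemma path_separated n (S : {set 'I_n}) :
  odd_independent (path_rel n) S ->
  separated (@ordS n.+2) (widen_ord (leqW (leqnSn n)) @: S).
Proof.
move=> oiS; apply/forall_inP => _ /imsetP[a aS ->].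
have lt_a := ltn_ord a.
have ordS_a : ordS (widen_ord (leqW (leqnSn n)) a) = a.+1 :> nat.
  by rewrite val_ordS //= ltnS ltnW.
have ordS2_a : ordS (ordS (widen_ord (leqW (leqnSn n)) a)) = a.+2 :> nat.
  by rewrite val_ordS ordS_a; lia.
apply/andP; split; apply/imsetP => -[b bS /(congr1 (@nat_of_ord _))].
  rewrite ordS_a /= => b_eq.
  by have := odd_independent_indep oiS aS bS; rewrite /path_rel b_eq eqxx.
rewrite ordS2_a /= => b_eq.
have lt_a1 : a.+1 < n by have := ltn_ord b; lia.
have nbrs_a1 u : path_rel n (Ordinal lt_a1) u = (u == a) || (u == b).
  by rewrite /path_rel -!val_eqE /=; apply/idP/idP; lia.
have := odd_independent_two_nbrs oiS aS bS nbrs_a1.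
by move/(congr1 (@nat_of_ord _)); lia.
Qed.

Lemma path_card_le n (S : {set 'I_n}) :
  odd_independent (path_rel n) S -> 3 * #|S| <= n.+2.
Proof.
move=> /path_separated /(card_separated (@ordS_inj _)).
by rewrite card_ord card_imset // => i j [] /ord_inj.
Qed.

Lemma cycle_multiples3_separated n :
  separated (@ordS n) [set i : 'I_n | 3 %| i & i < n - 2].
Proof.
apply/forall_inP => a; rewrite inE => /andP[a3 lt_a].
have ordS_a : ordS a = a.+1 :> nat by rewrite val_ordS; lia.
have ordS2_a : ordS (ordS a) = a.+2 :> nat by rewrite val_ordS ordS_a; lia.
by rewrite !inE ordS_a ordS2_a; lia.
Qed.

Theorem proposition7 :
  (forall n : nat, 1 <= n -> alpha_od (path_rel n) = (n + 2) %/ 3) /\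
  (forall n : nat, 3 <= n -> alpha_od (cycle_rel n) = (n - 2 + 2) %/ 3).
Proof.
split=> -[|n] // n_ge.
  apply: alpha_od_eq (path_multiples3_odd_independent _ n.+1) _ _.
    exact: card_multiples3.
  by move=> S /path_card_le; rewrite leq_divRL // mulnC addn2.
apply: (@alpha_od_eq _ _ [set i : 'I_n.+1 | 3 %| i & i < n.+1 - 2]).
- by rewrite cycle_odd_independentE //; apply: cycle_multiples3_separated.
- by apply: card_multiples3; rewrite leq_subr.
move=> S; rewrite cycle_odd_independentE // => /(card_separated (@ordS_inj _)).
by rewrite card_ord subnK ?(ltnW n_ge) // => le3S; rewrite leq_divRL // mulnC.
Qed.
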